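(* Let $\alpha_1,\ldots,\alpha_n$ and $\beta_1,\ldots,\beta_n$ be real numbers with $1\ge\alpha_1\ge\cdots\ge\alpha_n\ge 0$ and $1\ge\beta_1\ge\cdots\ge\beta_n\ge 0$. Define probability distributions on $\{0,1\}^n$ by \[ P(x)=\frac{1}{2^n}\prod_{j=1}^n\big(1+(-1)^{x_j}\alpha_j\big),\qquad Q(y)=\frac{1}{2^n}\prod_{j=1}^n\big(1+(-1)^{y_j}\beta_j\big). \] If $\prod_{j=1}^k\alpha_j\le\prod_{j=1}^k\beta_j$ for all $k=1,\ldots,n$, with equality for $k=n$, then $P\prec Q$.
   Context: For probability vectors $P,Q$ with $N$ entries, $P\prec Q$ (majorization) means: sorting entries in non-increasing order $p^\downarrow_1\ge\cdots\ge p^\downarrow_N$, $q^\downarrow_1\ge\cdots\ge q^\downarrow_N$, one has $\sum_{i=1}^k p^\downarrow_i\le\sum_{i=1}^k q^\downarrow_i$ for all $k=1,\ldots,N$, with equality for $k=N$. *)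

From HB Require Import structures.
From mathcomp Require Import all_boot all_order all_algebra.
Set Implicit Arguments. Unset Strict Implicit. Unset Printing Implicit Defensive.
Import Order.TTheory GRing.Theory Num.Theory.
Local Open Scope ring_scope.

Definition sorted_desc (R : realFieldType) (T : finType) (P : T -> R) : seq R :=
  sort (fun x y : R => y <= x) [seq P x | x <- enum T].

Definition majorized (R : realFieldType) (T : finType) (P Q : T -> R) : Prop :=
  (forall k : nat, (0 < k <= #|T|)%N ->
     \sum_(i < k) nth 0 (sorted_desc P) i <= \sum_(i < k) nth 0 (sorted_desc Q) i)
  /\ \sum_(i < #|T|) nth 0 (sorted_desc P) i = \sum_(i < #|T|) nth 0 (sorted_desc Q) i.

Definition prod_dist (R : realFieldType) (n : nat) (a : 'I_n -> R)
  (x : {ffun 'I_n -> bool}) : R :=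
  (2 ^+ n)^-1 * \prod_(j < n) (1 + (-1) ^+ (x j : nat) * a j).

From HB Require Import structures.
From mathcomp Require Import all_boot all_order all_algebra.
From mathcomp Require Import ring lra.
Import Order.TTheory GRing.Theory Num.Theory.
Local Open Scope ring_scope.
Set Implicit Arguments. Unset Strict Implicit. Unset Printing Implicit Defensive.

(* Majorization with equal totals follows from the inequalities
   \sum_x (P x - t)_+ <= \sum_x (Q x - t)_+ for all thresholds t: taking for t the k-th
   largest entry of Q bounds the sum of the k largest entries of P.
   For a product distribution with biases a_1..a_n, such a hinge sum is a sum over sign
   patterns of (c \prod_j (1 +- a_j) - t)_+, and it can only grow under two moves on the
   biases: raising one bias (convexity of the hinge), and replacing a pair (x1, x2) by
   (y1, y2) with y1 y2 = x1 x2 and y1 >= x1, x2, which widens both symmetric pairs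
   c (1 + x1 x2) +- c (x1 + x2) and c (1 - x1 x2) +- c (x1 - x2).
   Induct on n, with a the largest alpha. If no beta is below a, raise the alphas one by one
   to the betas. Otherwise let b' < a be the first beta below a, preceded by b >= a, and put
   v = b b' / a: (a, v) moves to (b, b'), and the remaining alphas against the betas with
   (b, b') replaced by v satisfy the prefix-product hypothesis again. *)

Section Hinge.
Variable R : realFieldType.
Implicit Types t u m e : R.

Definition hinge t u : R := Num.max (u - t) 0.

Lemma hinge_eq0 t u : u <= t -> hinge t u = 0.
Proof. by move=> le_ut; apply/max_idPr; rewrite subr_le0. Qed.

Lemma hinge_id t u : t <= u -> hinge t u = u - t.
Proof. by move=> le_tu; apply/max_idPl; rewrite subr_ge0. Qed.

Lemma hinge_ge0 t u : 0 <= hinge t u.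
Proof. by rewrite le_max lexx orbT. Qed.

Lemma hinge_ge t u : u <= t + hinge t u.
Proof. by rewrite -lerBlDl le_max lexx. Qed.

Lemma hinge_cases t u : (u <= t /\ hinge t u = 0) \/ (t <= u /\ hinge t u = u - t).
Proof.
have [le_tu | /ltW le_ut] := lerP t u; first by right; rewrite hinge_id.
by left; rewrite hinge_eq0.
Qed.

Lemma hinge_spread_le t m e e' : `|e| <= e' ->
  hinge t (m + e) + hinge t (m - e) <= hinge t (m + e') + hinge t (m - e').
Proof.
rewrite ler_norml => /andP[le_Ne' le_ee'].
case: (hinge_cases t (m + e)) => -[? ->]; case: (hinge_cases t (m - e)) => -[? ->];
case: (hinge_cases t (m + e')) => -[? ->]; case: (hinge_cases t (m - e')) => -[? ->]; lra.
Qed.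

End Hinge.

Section HingeMajorization.
Variables (R : realFieldType) (T : finType).
Implicit Types P Q : T -> R.

Lemma size_sorted_desc P : size (sorted_desc P) = #|T|.
Proof. by rewrite size_sort size_map cardT. Qed.

Lemma sum_sorted_desc P (f : R -> R) :
  \sum_(i < #|T|) f (sorted_desc P)`_i = \sum_x f (P x).
Proof.
rewrite -(big_mkord xpredT (fun i => f (sorted_desc P)`_i)) -(size_sorted_desc P).
rewrite -(big_nth 0 xpredT f) (perm_big _ (permEl (perm_sort _ _))) big_map big_enum.
by apply: eq_bigl => x; rewrite inE.
Qed.

Lemma nth_sorted_desc_le P (i j : nat) :
  (i <= j < #|T|)%N -> (sorted_desc P)`_j <= (sorted_desc P)`_i.
Proof.
case/andP=> le_ij lt_jT.
apply: (sorted_leq_nth ge_trans (@lexx _ _)) => //; first exact/sort_sorted/ge_total.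
  by rewrite inE size_sorted_desc (leq_ltn_trans le_ij).
by rewrite inE size_sorted_desc.
Qed.

Lemma sum_sorted_desc_le_hinge P k t : (k <= #|T|)%N ->
  \sum_(i < k) (sorted_desc P)`_i <= k%:R * t + \sum_x hinge t (P x).
Proof.
move=> le_kT; set s := sorted_desc P.
apply: (@le_trans _ _ (\sum_(i < k) (t + hinge t s`_i))).
  by apply: ler_sum => i _; exact: hinge_ge.
rewrite big_split /= sumr_const card_ord mulr_natl lerD2l.
rewrite -(sum_sorted_desc P (hinge t)) (big_ord_widen _ (fun i => hinge t s`_i) le_kT).
rewrite [X in _ <= X](bigID (fun i : 'I_#|T| => (i < k)%N)) /= lerDl.
by apply: sumr_ge0 => i _; exact: hinge_ge0.
Qed.

Lemma sum_sorted_desc_hinge P k : (k < #|T|)%N ->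
  \sum_(i < k.+1) (sorted_desc P)`_i =
  k.+1%:R * (sorted_desc P)`_k + \sum_x hinge (sorted_desc P)`_k (P x).
Proof.
move=> lt_kT; set s := sorted_desc P; set t := s`_k.
rewrite -(sum_sorted_desc P (hinge t)) (bigID (fun i : 'I_#|T| => (i < k.+1)%N)) /=.
rewrite [X in _ + (_ + X)]big1 ?addr0 => [|i]; last first.
  by rewrite -leqNgt => lt_ki; apply/hinge_eq0/nth_sorted_desc_le; rewrite ltnW ?ltn_ord.
rewrite -(big_ord_widen _ (fun i => hinge t s`_i) lt_kT).
rewrite mulr_natl -[X in t *+ X](card_ord k.+1) -sumr_const -big_split /=.
apply: eq_bigr => i _; rewrite hinge_id; first by rewrite addrC subrK.
by apply: nth_sorted_desc_le; rewrite -ltnS ltn_ord.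
Qed.

Lemma majorized_of_hinge P Q :
  (forall t, \sum_x hinge t (P x) <= \sum_x hinge t (Q x)) ->
  \sum_x P x = \sum_x Q x -> majorized P Q.
Proof.
move=> hinge_PQ sum_PQ; split; last by rewrite (sum_sorted_desc P id) (sum_sorted_desc Q id).
case=> // k /andP[_ lt_kT]; rewrite (sum_sorted_desc_hinge Q lt_kT).
by apply: le_trans (sum_sorted_desc_le_hinge P (sorted_desc Q)`_k lt_kT) _; rewrite lerD2l.
Qed.

End HingeMajorization.

Definition in01 {R : realFieldType} (x : R) := 0 <= x <= 1.

Section SignSum.
Variable R : realFieldType.
Implicit Types (a x : R) (s : seq R) (f g : R -> R) (c : R).

(* sign_sum s f c = \sum_(eps in {-1, 1}^(size s)) f (c * \prod_i (1 + eps_i * s_i)) *)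
Fixpoint sign_sum s f c : R :=
  if s is a :: s' then sign_sum s' f (c * (1 + a)) + sign_sum s' f (c * (1 - a)) else f c.

Lemma sign_sum_le s f g c : all in01 s -> (forall u, 0 <= u -> f u <= g u) -> 0 <= c ->
  sign_sum s f c <= sign_sum s g c.
Proof.
move=> + le_fg; elim: s c => [|a s IH] c /=; first by move=> _; exact: le_fg.
case/andP=> /andP[a_ge0 a_le1] s01 c_ge0.
by apply: lerD; apply: IH; rewrite // mulr_ge0 // ?subr_ge0 ?addr_ge0.
Qed.

Lemma sign_sum_cat s1 s2 f c : sign_sum (s1 ++ s2) f c = sign_sum s1 (sign_sum s2 f) c.
Proof. by elim: s1 c => [|a s1 IH] c //=; rewrite !IH. Qed.

Lemma sign_sum_swap a x s f c : sign_sum [:: a, x & s] f c = sign_sum [:: x, a & s] f c.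
Proof. by rewrite /= !(mulrAC c (1 + a)) !(mulrAC c (1 - a)) addrACA. Qed.

Lemma sign_sum_mid s1 a s2 f c : sign_sum (s1 ++ a :: s2) f c = sign_sum (a :: s1 ++ s2) f c.
Proof. by elim: s1 c => [|x s1 IH] c //; rewrite sign_sum_swap /= !IH. Qed.

Lemma perm_sign_sum s s' f c : perm_eq s s' -> sign_sum s f c = sign_sum s' f c.
Proof.
elim: s s' c => [|a s IH] s' c; first by rewrite perm_sym => /perm_nilP ->.
move=> perm_ss'; have a_s' : a \in s' by rewrite -(perm_mem perm_ss') mem_head.
move: perm_ss'; case/splitPr: a_s' => s1 s2 perm_ss'.
have mid : perm_eq (s1 ++ a :: s2) (a :: s1 ++ s2) by apply/permPl; exact: perm_catCA s1 [:: a] s2.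
have perm_s : perm_eq s (s1 ++ s2) by rewrite -(perm_cons a) (perm_trans perm_ss' mid).
by rewrite sign_sum_mid /= !(IH _ _ perm_s).
Qed.

Lemma sign_sum2 x1 x2 f c :
  sign_sum [:: x1; x2] f c =
    f (c * (1 + x1 * x2) + c * (x1 + x2)) + f (c * (1 + x1 * x2) - c * (x1 + x2))
  + (f (c * (1 - x1 * x2) + c * (x1 - x2)) + f (c * (1 - x1 * x2) - c * (x1 - x2))).
Proof.
rewrite /=.
have -> : c * (1 + x1) * (1 + x2) = c * (1 + x1 * x2) + c * (x1 + x2) by ring.
have -> : c * (1 + x1) * (1 - x2) = c * (1 - x1 * x2) + c * (x1 - x2) by ring.
have -> : c * (1 - x1) * (1 + x2) = c * (1 - x1 * x2) - c * (x1 - x2) by ring.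
have -> : c * (1 - x1) * (1 - x2) = c * (1 + x1 * x2) - c * (x1 + x2) by ring.
by ring.
Qed.

End SignSum.

Section FfunCons.
Variables (T : Type) (n : nat).

Definition ffun_cons (p : T * {ffun 'I_n -> T}) : {ffun 'I_n.+1 -> T} :=
  [ffun i => if unlift ord0 i is Some j then p.2 j else p.1].

Definition ffun_uncons (x : {ffun 'I_n.+1 -> T}) : T * {ffun 'I_n -> T} :=
  (x ord0, [ffun j => x (lift ord0 j)]).

Lemma ffun_consK : cancel ffun_cons ffun_uncons.
Proof.
case=> x y; rewrite /ffun_uncons ffunE unlift_none; congr pair.
by apply/ffunP => j; rewrite !ffunE liftK.
Qed.

Lemma ffun_unconsK : cancel ffun_uncons ffun_cons.
Proof.
by move=> x; apply/ffunP => i; rewrite ffunE; case: unliftP => [j ->|->]; rewrite ?ffunE.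
Qed.

End FfunCons.

Lemma sum_sign_sum (R : realFieldType) n (a : 'I_n -> R) (F : R -> R) c :
  \sum_(x : {ffun 'I_n -> bool}) F (c * \prod_(j < n) (1 + (-1) ^+ (x j : nat) * a j))
  = sign_sum (codom a) F c.
Proof.
elim: n a c => [|n IH] a c.
  rewrite (big_pred1 [ffun=> false]) => [|x]; last by apply/esym/eqP/ffunP => -[].
  by rewrite big_ord0 mulr1 codomE enum_ord0.
rewrite (reindex (@ffun_cons bool n)) /=; last first.
  exact/onW_bij/(Bijective (@ffun_consK _ _) (@ffun_unconsK _ _)).
rewrite -(pair_big xpredT xpredT (fun (b : bool) (y : {ffun 'I_n -> bool}) =>
  F (c * \prod_(j < n.+1) (1 + (-1) ^+ (ffun_cons (b, y) j : nat) * a j)))) /=.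
rewrite big_bool /= codomE enum_ordSl /= -map_comp -codomE.
have split_prod b (y : {ffun 'I_n -> bool}) :
    c * \prod_(j < n.+1) (1 + (-1) ^+ (ffun_cons (b, y) j : nat) * a j)
    = c * (1 + (-1) ^+ (b : nat) * a ord0)
      * \prod_(j < n) (1 + (-1) ^+ (y j : nat) * (a \o lift ord0) j).
  rewrite big_ord_recl -mulrA ffunE unlift_none; congr (_ * (_ * _)).
  by apply: eq_bigr => j _; rewrite ffunE liftK.
under eq_bigr do rewrite split_prod.
under [X in _ + X]eq_bigr do rewrite split_prod.
by rewrite !IH expr1 expr0 mulN1r mul1r addrC.
Qed.

Section HingeOrder.
Variable R : realFieldType.
Implicit Types (a b x y : R) (s r : seq R).

Definition hinge_le s s' :=
  forall t c, 0 <= c -> sign_sum s (hinge t) c <= sign_sum s' (hinge t) c.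

Lemma hinge_le_refl s : hinge_le s s.
Proof. by move=> t c _. Qed.

Lemma hinge_le_trans s1 s2 s3 : hinge_le s1 s2 -> hinge_le s2 s3 -> hinge_le s1 s3.
Proof. by move=> le12 le23 t c c_ge0; apply: le_trans (le12 t c c_ge0) (le23 t c c_ge0). Qed.

Lemma perm_hinge_le s1 s1' s2 s2' :
  perm_eq s1 s2 -> perm_eq s1' s2' -> hinge_le s1 s1' -> hinge_le s2 s2'.
Proof.
by move=> p1 p1' le1 t c c_ge0; rewrite -(perm_sign_sum _ _ p1) -(perm_sign_sum _ _ p1') le1.
Qed.

Lemma hinge_le_infix s1 s2 r r' : all in01 (s1 ++ s2) -> hinge_le r r' ->
  hinge_le (s1 ++ r ++ s2) (s1 ++ r' ++ s2).
Proof.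
move=> s01 le_rr'.
have to_end r0 : perm_eq ((s1 ++ s2) ++ r0) (s1 ++ r0 ++ s2) by rewrite -catA perm_cat2l perm_catC.
apply: perm_hinge_le (to_end r) (to_end r') _ => t c c_ge0.
by rewrite !(sign_sum_cat (s1 ++ s2)); apply: sign_sum_le => // u u_ge0; apply: le_rr'.
Qed.

Lemma hinge_le_cons x y s s' : in01 x -> all in01 s' ->
  hinge_le [:: x] [:: y] -> hinge_le s s' -> hinge_le (x :: s) (y :: s').
Proof.
move=> /andP[x_ge0 x_le1] s'01 le_xy le_ss'; apply: (@hinge_le_trans _ (x :: s')).
  move=> t c c_ge0 /=; have x1_ge0 : 0 <= 1 - x by rewrite subr_ge0.
  by apply: lerD; apply: le_ss'; apply: mulr_ge0 => //; exact: addr_ge0.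
exact: (@hinge_le_infix [::] s' _ _ s'01 le_xy).
Qed.

Lemma hinge_le1 x y : 0 <= x <= y -> hinge_le [:: x] [:: y].
Proof.
case/andP=> x_ge0 le_xy t c c_ge0.
have sign_sum1 z : sign_sum [:: z] (hinge t) c = hinge t (c + c * z) + hinge t (c - c * z).
  by rewrite /= mulrDr mulrBr mulr1.
rewrite !sign_sum1; apply: hinge_spread_le.
by rewrite normrM ger0_norm // ger0_norm // ler_wpM2l.
Qed.

Lemma hinge_le2 x1 x2 y1 y2 : 0 < y1 -> 0 <= x1 <= y1 -> 0 <= x2 <= y1 -> 0 <= y2 ->
  x1 * x2 = y1 * y2 -> hinge_le [:: x1; x2] [:: y1; y2].
Proof.
move=> y1_gt0 /andP[x1_ge0 le_x1y1] /andP[x2_ge0 le_x2y1] y2_ge0 eq_prod t c c_ge0.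
have le_y2x1 : y2 <= x1.
  by rewrite -(ler_pM2l y1_gt0) -eq_prod [y1 * _]mulrC; exact: ler_wpM2l.
have le_y2x2 : y2 <= x2 by rewrite -(ler_pM2l y1_gt0) -eq_prod; exact: ler_wpM2r.
have le_sum : x1 + x2 <= y1 + y2.
  rewrite -(ler_pM2l y1_gt0) -subr_ge0.
  have -> : y1 * (y1 + y2) - y1 * (x1 + x2) = (y1 - x1) * (y1 - x2).
    by rewrite mulrDr -eq_prod; ring.
  by rewrite mulr_ge0 // subr_ge0.
rewrite !sign_sum2 -eq_prod; apply: lerD; apply: hinge_spread_le;
  by rewrite normrM ger0_norm // ler_wpM2l // ler_norml; apply/andP; split; lra.
Qed.

Lemma hinge_le_sep a s s' : size s = size s' ->
  all (fun x => 0 <= x <= a) s -> all (fun y => a <= y <= 1) s' -> hinge_le s s'.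
Proof.
elim: s s' => [|x s IH] [|y s'] //; first by move=> *; exact: hinge_le_refl.
move=> [size_ss'] /andP[/andP[x_ge0 le_xa] s_le] /andP[/andP[le_ay y_le1] s'_ge].
have a_ge0 := le_trans x_ge0 le_xa.
apply: hinge_le_cons; last exact: IH.
- by rewrite /in01 x_ge0 (le_trans le_xa (le_trans le_ay y_le1)).
- by apply: sub_all s'_ge => z /andP[le_az le_z1]; rewrite /in01 le_z1 (le_trans a_ge0).
- by apply: hinge_le1; rewrite x_ge0 (le_trans le_xa).
Qed.

End HingeOrder.

Section PrefixProducts.
Variable R : realFieldType.
Implicit Types (a b v x y : R) (s : seq R).

Lemma prod_le_sep a s s' : size s = size s' ->
  all (fun x => 0 <= x <= a) s -> all (fun y => a <= y) s' ->
  \prod_(x <- s) x <= \prod_(y <- s') y.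
Proof.
elim: s s' => [|x s IH] [|y s'] //.
move=> [size_ss'] /andP[/andP[x_ge0 le_xa] s_le] /andP[le_ay s'_ge].
rewrite !big_cons ler_pM ?(le_trans le_xa) ?IH //.
by rewrite big_seq prodr_ge0 // => z /(allP s_le) /andP[].
Qed.

Lemma split_first_lt a x s : a <= x -> has (fun y => y < a) s ->
  exists s1 b b' s2,
    [/\ x :: s = s1 ++ [:: b, b' & s2], all (fun y => a <= y) s1, a <= b & b' < a].
Proof.
elim: s x => [|y s IH] x //= le_ax.
case: (ltP y a) => [lt_ya _ | le_ay has_s]; first by exists [::], x, y, s.
have [s1 [b [b' [s2 [-> s1_ge le_ab lt_b'a]]]]] := IH y le_ay has_s.
by exists (x :: s1), b, b', s2; split; rewrite //= le_ax.
Qed.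

Definition prefix_prod_le s s' :=
  forall k, \prod_(x <- take k s) x <= \prod_(y <- take k s') y.

Lemma prefix_prod_le_merge a v b b' s s1 s2 :
  0 < a -> a * v = b * b' -> all (fun x => 0 <= x <= a) s -> all (fun y => a <= y) s1 ->
  (size s1 <= size s)%N ->
  prefix_prod_le (a :: s) (s1 ++ [:: b, b' & s2]) -> prefix_prod_le s (s1 ++ v :: s2).
Proof.
move=> a_gt0 eq_av s_le s1_ge le_s1s pre k.
have [le_ks1 | lt_s1k] := leqP k (size s1).
  rewrite takel_cat //; apply: (prod_le_sep (a := a)).
  - by rewrite !size_takel // (leq_trans le_ks1).
  - by apply/allP => x /mem_take /(allP s_le).
  - by apply/allP => y /mem_take /(allP s1_ge).
have [m ->] : exists m, k = (size s1 + m.+1)%N.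
  by exists (k - size s1).-1; rewrite prednK ?subn_gt0 // subnKC // ltnW.
have take_s1 n r : take (size s1 + n) (s1 ++ r) = s1 ++ take n r.
  by rewrite takeD take_size_cat // drop_size_cat.
have := pre (size s1 + m.+1).+1; rewrite /= -addnS !take_s1 /= !big_cat !big_cons /=.
move=> pre_k; rewrite -(ler_pM2l a_gt0) (le_trans pre_k) //.
by rewrite [leRHS]mulrCA [a * _]mulrA eq_av -mulrA.
Qed.

Lemma hinge_le_cons_merge a v b b' s s1 s2 :
  0 < a <= b -> b <= 1 -> v <= b -> 0 <= b' -> a * v = b * b' -> all in01 (s1 ++ v :: s2) ->
  hinge_le s (s1 ++ v :: s2) -> hinge_le (a :: s) (s1 ++ [:: b, b' & s2]).
Proof.
case/andP=> a_gt0 le_ab b_le1 le_vb b'_ge0 eq_av s1vs2_01 le_s.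
move: (s1vs2_01); rewrite all_cat /= => /and3P[s1_01 /andP[v_ge0 _] s2_01].
apply: (@hinge_le_trans _ _ (a :: s1 ++ v :: s2)).
  by apply: hinge_le_cons le_s => //; rewrite /in01 ltW // (le_trans le_ab).
have mid : perm_eq (s1 ++ [:: a, v & s2]) (a :: s1 ++ v :: s2).
  by apply/permPl; exact: perm_catCA s1 [:: a] (v :: s2).
apply: perm_hinge_le mid (perm_refl _) _.
apply: (@hinge_le_infix _ s1 s2 [:: a; v] [:: b; b']); first by rewrite all_cat s1_01.
apply: hinge_le2 => //; [exact: lt_le_trans le_ab | by rewrite ltW | by rewrite v_ge0].
Qed.

Lemma hinge_le_of_prefix_prod s s' : size s = size s' -> sorted >=%R s ->
  all in01 s -> all in01 s' -> prefix_prod_le s s' -> hinge_le s s'.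
Proof.
elim: s s' => [|a s IH] [|b s'] //; first by move=> *; exact: hinge_le_refl.
move=> size_ss' sorted_as /andP[a01 s01] bs'01 pre.
have le_ab : a <= b by have := pre 1%N; rewrite !take_cons !take0 !big_seq1.
have s_le : all (fun x => 0 <= x <= a) s.
  apply/allP => x x_s; have /andP[x_ge0 _] := allP s01 x x_s.
  by rewrite x_ge0; exact: (allP (order_path_min ge_trans sorted_as)).
have [has_lt | /hasPn ge_a] := boolP (has (fun y => y < a) s'); last first.
  apply: (hinge_le_sep (a := a)) => //; first by rewrite /= s_le lexx !andbT; case/andP: a01.
  apply/allP => y y_bs'; have /andP[_ ->] := allP bs'01 y y_bs'.
  by move: y_bs'; rewrite inE andbT => /predU1P[-> // | /ge_a]; rewrite -leNgt.
have [s1 [c [c' [s2 [eq_bs' s1_ge le_ac lt_c'a]]]]] := split_first_lt le_ab has_lt.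
rewrite eq_bs' in size_ss' bs'01 pre *.
move: (bs'01); rewrite all_cat /= => /and4P[s1_01 /andP[_ c_le1] /andP[c'_ge0 _] s2_01].
have a_gt0 : 0 < a := le_lt_trans c'_ge0 lt_c'a.
have size_s : size s = (size s1 + (size s2).+1)%N.
  by move: size_ss'; rewrite size_cat /= addnS => -[].
set v := c * c' / a.
have eq_av : a * v = c * c' by rewrite /v mulrCA mulfV ?mulr1 // gt_eqF.
have c_ge0 : 0 <= c := ltW (lt_le_trans a_gt0 le_ac).
have v_ge0 : 0 <= v by rewrite /v; apply: divr_ge0; [exact: mulr_ge0 | exact: ltW].
have le_vc : v <= c by rewrite /v -mulrA ler_piMr // ler_pdivrMr // mul1r ltW.
have s1vs2_01 : all in01 (s1 ++ v :: s2).
  by rewrite all_cat /= s1_01 s2_01 /in01 v_ge0 (le_trans le_vc c_le1).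
apply: (hinge_le_cons_merge _ c_le1 le_vc c'_ge0 eq_av s1vs2_01); first by rewrite a_gt0.
apply: IH => //; first by rewrite size_s size_cat.
- exact: path_sorted sorted_as.
- by apply: prefix_prod_le_merge eq_av s_le s1_ge _ pre; rewrite // size_s leq_addr.
Qed.

End PrefixProducts.

Lemma sorted_codom (T : Type) (r : rel T) n (f : 'I_n -> T) :
  {homo f : i j / (i <= j)%N >-> r i j} -> sorted r (codom f).
Proof.
move=> f_homo; rewrite codomE sorted_map.
apply: (@sub_sorted _ (relpre val leq)) => [i j /f_homo //|].
by rewrite -sorted_map val_enum_ord iota_sorted.
Qed.

Lemma take_enum_ord n k : (k <= n)%N ->
  take k (enum 'I_n) = [seq j : 'I_n <- enum 'I_n | (j < k)%N].
Proof.
move=> le_kn; apply: (inj_map val_inj).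
rewrite map_take val_enum_ord take_iota (minn_idPl le_kn).
rewrite -(filter_map val (fun i => (i < k)%N)) val_enum_ord.
by have := filter_iota_ltn 0 le_kn; rewrite add0n.
Qed.

Lemma prefix_prod_le_codom (R : realFieldType) n (a b : 'I_n -> R) :
  (forall k, (1 <= k <= n)%N ->
     \prod_(j < n | (j < k)%N) a j <= \prod_(j < n | (j < k)%N) b j) ->
  prefix_prod_le (codom a) (codom b).
Proof.
have prod_take (c : 'I_n -> R) k : (k <= n)%N ->
    \prod_(x <- take k (codom c)) x = \prod_(j < n | (j < k)%N) c j.
  by move=> le_kn; rewrite codomE -map_take big_map take_enum_ord // big_filter big_enum_cond.
move=> le_ab k; rewrite -[codom a]take_size -[codom b]take_size -!take_min !size_codom card_ord.
have : (minn k n <= n)%N by rewrite geq_minr.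
case: (minn k n) => [|k'] le_k'n; first by rewrite !take0 !big_nil.
by rewrite !prod_take //; apply: le_ab.
Qed.

Lemma sum_prod_dist (R : realFieldType) n (a : 'I_n -> R) : \sum_x prod_dist a x = 1.
Proof.
rewrite /prod_dist -mulr_sumr.
rewrite -(bigA_distr_bigA (fun j (e : bool) => 1 + (-1) ^+ (e : nat) * a j)) /=.
have sum_signs j : \sum_(e : bool) (1 + (-1) ^+ (e : nat) * a j) = 2.
  by rewrite big_bool /= expr1 expr0 mulN1r mul1r addrACA addNr addr0.
rewrite (eq_bigr _ (fun j _ => sum_signs j)) prodr_const card_ord.
by rewrite mulVf // expf_neq0 // pnatr_eq0.
Qed.

Unset Implicit Arguments.

Theorem lemma4 (R : realFieldType) (n : nat) (a b : 'I_n -> R)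
  (ha01 : forall j, 0 <= a j <= 1) (hb01 : forall j, 0 <= b j <= 1)
  (ha_mono : forall i j : 'I_n, (i <= j)%N -> a j <= a i)
  (hb_mono : forall i j : 'I_n, (i <= j)%N -> b j <= b i)
  (hprod : forall k : nat, (1 <= k <= n)%N ->
     \prod_(j < n | (j < k)%N) a j <= \prod_(j < n | (j < k)%N) b j)
  (hprod_eq : \prod_(j < n) a j = \prod_(j < n) b j) :
  majorized (prod_dist a) (prod_dist b).
Proof.
have in01_codom (c : 'I_n -> R) : (forall j, 0 <= c j <= 1) -> all in01 (codom c).
  by move=> c01; apply/allP => x /codomP[j ->]; exact: c01.
apply: majorized_of_hinge => [t|]; last by rewrite !sum_prod_dist.
rewrite /prod_dist !sum_sign_sum; apply: hinge_le_of_prefix_prod.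
- by rewrite !size_codom.
- exact: sorted_codom.
- exact: in01_codom.
- exact: in01_codom.
- exact: prefix_prod_le_codom.
- by rewrite invr_ge0 exprn_ge0.
Qed.
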